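(* For every $\delta<\frac{1}{2e^4}$, every $T>0$ and every $\Delta>0$, there exists an ergodic MDP $\mathcal{M}$ with $S=3$ states, $A=2$ actions and optimal bias span $H=1/2$ such that any algorithm that computes a $\Delta$-tight upper bound for the optimal bias span with probability $1-\delta$, using a generative model, uses in expectation more than $T$ samples when run on $\mathcal{M}$.
   Context: A (finite) MDP is a tuple $(\mathcal{S},\mathcal{A},P,r)$ with $|\mathcal{S}|=S$, $|\mathcal{A}|=A$, transition kernel $P$ (with $p_{s,a}$ the distribution of the next state from $(s,a)$) and reward distributions $r(s,a)$ supported in $[0,1]$ with mean $\bar r_{s,a}$. An MDP is ergodic if for every stationary deterministic policy and every pair of states $s,s'$ the expected hitting time of $s'$ from $s$ is finite. For a stationary policy $\pi$, the gain is $g_\pi(s)=\lim_{T\to\infty}\frac1T\mathbb{E}_\pi[\sum_{t=0}^{T-1}r_t\mid s_0=s]$. In such an MDP the optimal gain $g^\star$ is a constant and there is a vector $b^\star\in\mathbb{R}^S$ (unique up to an additive constant) with $g^\star+b^\star(s)=\max_a\{\bar r_{s,a}+p_{s,a}b^\star\}$ for all $s$, namely the bias vector $b_\pi=\sum_{t\ge1}(P_\pi^{t-1}-\bar P_\pi)\bar r_\pi$ of the optimal policy, where $\bar P_\pi=\lim_T\frac1T\sum_{t=1}^TP_\pi^{t-1}$. The optimal bias span is $H=\max_s b^\star(s)-\min_s b^\star(s)$. A generative model allows the algorithm, at each step, to choose any pair $(s,a)$ and observe an independent reward sample $r\sim r(s,a)$ and next state $s'\sim p_{s,a}$; the number of samples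 is the number of such queries before the algorithm stops. An algorithm computes a $\Delta$-tight upper bound for the optimal bias span with probability $1-\delta$ if, on every MDP with optimal bias span $H$, it outputs $\hat H$ with $\mathbb{P}(H\le\hat H\le H+\Delta)\ge1-\delta$. *)

From mathcomp Require Import all_boot all_order all_algebra.
From mathcomp Require Import all_classical all_reals all_analysis.
Set Implicit Arguments.
Unset Strict Implicit.
Unset Printing Implicit Defensive.
Import Order.TTheory GRing.Theory Num.Theory.
Local Open Scope classical_set_scope.
Local Open Scope ring_scope.

(* Reward distributions are finitely supported distributions on [0,1], *)
(* given as lists of (value, weight) pairs.   *)

Record mdp (R : realType) (S A : nat) := MDP {
  trans : 'I_S -> 'I_A -> 'I_S -> R;
  rew   : 'I_S -> 'I_A -> seq (R * R)
}.

Section MDPDefs.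
Variables (R : realType) (S A : nat).
Implicit Types (M : mdp R S A).

Definition rew_prob M (s : 'I_S) (a : 'I_A) (x : R) : R :=
  \sum_(p <- rew M s a | p.1 == x) p.2.

Definition mean_rew M (s : 'I_S) (a : 'I_A) : R :=
  \sum_(p <- rew M s a) p.1 * p.2.

Definition valid_mdp M : Prop :=
  (forall s a s', 0 <= trans M s a s') /\
  (forall s a, \sum_(s' < S) trans M s a s' = 1) /\
  (forall s a p, p \in rew M s a -> 0 <= p.1 <= 1 /\ 0 <= p.2) /\
  (forall s a, \sum_(p <- rew M s a) p.2 = 1).

Fixpoint avoid_prob M (pi : 'I_S -> 'I_A) (s' : 'I_S) (t : nat) (x : 'I_S) : R :=
  match t with
  | 0 => (x != s')%:R
  | t.+1 => (x != s')%:R * \sum_(y < S) trans M x (pi x) y * avoid_prob M pi s' t y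
  end.

(* expected hitting time of s' from s under pi: E[tau] = sum_t P(tau > t),
   tau = min {t >= 0 | X_t = s'} *)
Definition exp_hitting_time M (pi : 'I_S -> 'I_A) (s s' : 'I_S) : \bar R :=
  \esum_(t in [set: nat]) (avoid_prob M pi s' t s)%:E.

Definition ergodic M : Prop :=
  forall (pi : 'I_S -> 'I_A) (s s' : 'I_S), (exp_hitting_time M pi s s' < +oo)%E.

Definition bellman_solution M (g : R) (b : 'I_S -> R) : Prop :=
  forall s : 'I_S,
    (forall a : 'I_A, mean_rew M s a + \sum_(s' < S) trans M s a s' * b s' <= g + b s) /\
    (exists a : 'I_A, mean_rew M s a + \sum_(s' < S) trans M s a s' * b s' = g + b s).

Definition is_span (b : 'I_S -> R) (H : R) : Prop :=
  (forall s t : 'I_S, b s - b t <= H) /\ (exists s t : 'I_S, b s - b t = H).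

Definition opt_bias_span M (H : R) : Prop :=
  exists (g : R) (b : 'I_S -> R), bellman_solution M g b /\ is_span b H.

(* A step of the interaction: query (s,a), observation (reward, s').   *)
(* A (randomized, behavioural) algorithm maps the history so far to a  *)
(* distribution over decisions: None = stop, Some (s,a) = query (s,a); *)
(* when it stops it outputs Hhat drawn from a probability law on R     *)
(* that may depend on the history.                                     *)

Definition step := (('I_S * 'I_A) * (R * 'I_S))%type.
Definition history := seq step.

Record algorithm := Algorithm {
  decide : history -> option ('I_S * 'I_A) -> R;
  output : history -> probability R R
}.

Definition valid_algorithm (alg : algorithm) : Prop :=
  (forall h d, 0 <= decide alg h d) /\
  (forall h, decide alg h None + \sum_(q : 'I_S * 'I_A) decide alg h (Some q) = 1).

Definition obs_prob M (q : 'I_S * 'I_A) (o : R * 'I_S) : R :=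
  rew_prob M q.1 q.2 o.1 * trans M q.1 q.2 o.2.

(* probability that the run of alg on M performs at least size h queries and
   its first size h steps are exactly h; rh is the history in reverse order *)
Fixpoint reach_rev (alg : algorithm) M (rh : history) : R :=
  match rh with
  | [::] => 1
  | x :: rh' => reach_rev alg M rh' * decide alg (rev rh') (Some x.1) * obs_prob M x.1 x.2
  end.

Definition reach (alg : algorithm) M (h : history) : R := reach_rev alg M (rev h).

(* expected number of samples E[N] = sum_{n >= 1} P(N >= n) *)
Definition expected_samples (alg : algorithm) M : \bar R :=
  \esum_(h in [set h : history | h != [::]]) (reach alg M h)%:E.

Definition prob_tight (alg : algorithm) M (H Delta : R) : \bar R :=
  \esum_(h in [set: history])
    ((reach alg M h * decide alg h None)%:E * output alg h `[H, (H + Delta)%R]%classic)%E.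

Definition tight_bias_bound (alg : algorithm) (Delta delta : R) : Prop :=
  forall M, valid_mdp M -> ergodic M ->
  forall H, opt_bias_span M H -> ((1 - delta)%:E <= prob_tight alg M H Delta)%E.

End MDPDefs.

From mathcomp Require Import all_boot all_order all_algebra.
From mathcomp Require Import all_classical all_reals all_analysis.
From mathcomp Require Import ring lra.
Set Implicit Arguments.
Unset Strict Implicit.
Unset Printing Implicit Defensive.
Import Order.TTheory GRing.Theory Num.Theory.
Local Open Scope classical_set_scope.
Local Open Scope ring_scope.

(* Le Cam's two-point method. The hard instances have three states, transitions that
   ignore the action (stay with probability [1 - 2 eta], move to each other state with
   probability [eta]) and rewards only in state [0], with mean [a (1 - e) + e]; their
   optimal bias span is [(a (1 - e) + e) / (3 eta)]. For [e = 0] it is [1/2], while for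
   [e = eps] it exceeds [1/2 + Delta], so a [Delta]-tight algorithm must put probability
   at least [1 - delta] on two disjoint output intervals, one for each MDP.
   Every observation is at least [1 - eps] times as likely under the perturbed MDP, so a
   stopped history of length [n] loses at most a factor [1 - n eps], and the probability
   of any output event moves by at most [eps] times the expected number of samples.
   With [eps = 1 / (2 (T + 1))] and at most [T] samples this gives
   [2 (1 - delta) <= 3/2], contradicting [delta < 1 / (2 e^4) < 1/4]. *)

Section ExtendedSums.
Variable R : realType.

Lemma esum_le_finite_sums (T : choiceType) (D : set T) (f : T -> R) (c : R) :
  (forall X : set T, finite_set X -> X `<=` D ->
    \sum_(x <- finmap.enum_fset (fset_set X)) f x <= c) ->
  (\esum_(x in D) (f x)%:E <= c%:E)%E.
Proof.
move=> le_c; apply: ge_ereal_sup => _ [X [finX XD] <-].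
by rewrite fsbig_finite//= sumEFin lee_fin; apply: le_c.
Qed.

Lemma le_esum_subset (T : choiceType) (A B : set T) (f : T -> \bar R) :
  A `<=` B -> (\esum_(x in A) f x <= \esum_(x in B) f x)%E.
Proof.
move=> AB; apply: ge_ereal_sup => _ [X [finX XA] <-]; apply: ereal_sup_ubound.
by exists X => //; split => //; apply: subset_trans XA AB.
Qed.

Lemma ler_sum_uniq_subset (T : eqType) (U V : seq T) (f : T -> R) :
  uniq U -> uniq V -> {subset U <= V} -> (forall x, 0 <= f x) ->
  \sum_(x <- U) f x <= \sum_(x <- V) f x.
Proof.
move=> uU uV UV f0.
rewrite -(perm_big _ (introT permPl (perm_filterC (mem U) V))) big_cat /=.
have -> : \sum_(x <- [seq x <- V | mem U x]) f x = \sum_(x <- U) f x.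
  apply: perm_big; apply: uniq_perm => //; first exact: filter_uniq.
  by move=> x; rewrite mem_filter /=; case xU: (x \in U) => //=; rewrite UV.
by rewrite lerDl sumr_ge0.
Qed.

Lemma esum_finType_le (T : finType) (f : T -> R) : (forall x, 0 <= f x) ->
  (\esum_(x in [set: T]) (f x)%:E <= (\sum_x f x)%:E)%E.
Proof.
move=> f0; apply: esum_le_finite_sums => X _ _; rewrite -big_enum.
by apply: ler_sum_uniq_subset => // [|x _]; rewrite ?enum_uniq ?mem_enum.
Qed.

Lemma esumZl_le (T : choiceType) (D : set T) (c : R) (f : T -> \bar R) :
  0 <= c -> (forall x, (0 <= f x)%E) ->
  (\esum_(x in D) (c%:E * f x) <= c%:E * \esum_(x in D) f x)%E.
Proof.
move=> c0 f0; apply: ge_ereal_sup => _ [X [finX XD] <-].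
rewrite fsbig_finite//= -ge0_sume_distrr//; apply: lee_wpmul2l; first by rewrite lee_fin.
by rewrite -fsbig_finite//; apply: ereal_sup_ubound; exists X.
Qed.

Lemma esum_geometric_le (q : R) : 0 <= q < 1 ->
  (\esum_(t in [set: nat]) (q ^+ t)%:E <= ((1 - q)^-1)%:E)%E.
Proof.
move=> /andP[q0 q1]; apply: esum_le_finite_sums => X _ _.
set U := finmap.enum_fset _; set N := (\max_(t <- U) t).+1.
apply: (@le_trans _ _ (\sum_(t < N) q ^+ t)).
  rewrite -(big_mkord xpredT) /index_iota subn0.
  apply: ler_sum_uniq_subset => [||t tU|t]; rewrite ?iota_uniq ?exprn_ge0 //.
    exact: finmap.fset_uniq.
  by rewrite mem_iota add0n ltnS; apply: (@leq_bigmax_seq _ _ xpredT).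
have q1' : 0 < 1 - q by rewrite subr_gt0.
rewrite -(ler_pM2l q1') mulfV ?gt_eqF //.
have := subrX1 q N.
have : 0 <= q ^+ N by rewrite exprn_ge0.
nra.
Qed.

Lemma finite_set_size_bound (T : choiceType) (X : set (seq T)) : finite_set X ->
  exists n, forall h, X h -> (size h <= n)%N.
Proof.
move=> /finite_fsetP[F ->]; exists (\max_(h <- finmap.enum_fset F) size h) => h /= hF.
exact: (@leq_bigmax_seq _ _ xpredT).
Qed.

Lemma bernoulli_ineq (e : R) n : 0 <= e <= 1 -> 1 - n%:R * e <= (1 - e) ^+ n.
Proof.
move=> /andP[e0 e1]; elim: n => [|n IH]; first by rewrite mul0r subr0 expr0.
rewrite exprSr -addn1 natrD.
have := ler_wpM2r (_ : 0 <= 1 - e) IH; rewrite subr_ge0 => /(_ e1).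
have : 0 <= (n%:R : R) by rewrite ler0n.
nra.
Qed.

End ExtendedSums.

Section ValidMDP.
Variables (R : realType) (S A : nat) (M : mdp R S A).
Hypothesis M_valid : valid_mdp M.

Lemma rew_prob_ge0 s a x : 0 <= rew_prob M s a x.
Proof.
have [_ [_ [rew01 _]]] := M_valid.
by rewrite /rew_prob big_seq_cond sumr_ge0 // => p /andP[/rew01[]].
Qed.

Lemma obs_prob_ge0 q o : 0 <= obs_prob M q o.
Proof. by have [trans0 _] := M_valid; rewrite mulr_ge0 ?rew_prob_ge0. Qed.

Lemma sum_rew_prob_uniq_le1 s a (U : seq R) : uniq U ->
  \sum_(x <- U) rew_prob M s a x <= 1.
Proof.
have [_ [_ [rew01 rew1]]] := M_valid; move=> uU.
rewrite /rew_prob; under eq_bigr do rewrite big_mkcond.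
rewrite exchange_big /= -(rew1 s a) big_seq [X in _ <= X]big_seq.
apply: ler_sum => p pin; rewrite -big_mkcond /=.
have [_ p2] := rew01 s a p pin.
have [pU|pU] := boolP (p.1 \in U).
  rewrite -big_filter (_ : [seq x <- U | p.1 == x] = [:: p.1]) ?big_seq1 //.
  by rewrite -(filter_pred1_uniq uU pU); apply: eq_filter => x; rewrite eq_sym.
by rewrite big1_seq // => x /andP[/eqP <-]; rewrite (negbTE pU).
Qed.

Lemma esum_obs_prob_le1 q : (\esum_(o in [set: R * 'I_S]) (obs_prob M q o)%:E <= 1)%E.
Proof.
have [trans0 [trans1 _]] := M_valid.
rewrite (_ : [set: R * 'I_S] = [set: R] `*`` (fun _ => [set: 'I_S])); last first.
  by apply/seteqP; split.
rewrite -(@esum_esum _ _ _ setT (fun _ => setT)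
  (fun x s' => (rew_prob M q.1 q.2 x * trans M q.1 q.2 s')%:E)) /=; last first.
  by move=> x s' _ _; rewrite lee_fin mulr_ge0 ?rew_prob_ge0.
apply: (@le_trans _ _ (\esum_(x in [set: R]) (rew_prob M q.1 q.2 x)%:E)).
  apply: le_esum => x _; under eq_esum do rewrite EFinM.
  apply: le_trans (@esumZl_le R _ setT _ (fun s' => (trans M q.1 q.2 s')%:E)
    (rew_prob_ge0 _ _ x) _) _.
    by move=> s'; rewrite lee_fin.
  rewrite -[X in (_ <= X)%E]mule1; apply: lee_wpmul2l; first by rewrite lee_fin rew_prob_ge0.
  by rewrite -(trans1 q.1 q.2) esum_finType_le.
apply: esum_le_finite_sums => X _ _; apply: sum_rew_prob_uniq_le1.
exact: finmap.fset_uniq.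
Qed.

(* with every transition probability at least [eta], the chain avoids [s'] during
   [t] steps with probability at most [(1 - eta)^t] *)
Lemma ergodic_of_trans_ge (eta : R) : 0 < eta ->
  (forall s a s', eta <= trans M s a s') -> ergodic M.
Proof.
move=> eta0 trans_ge pi s s'.
have [trans0 [trans1 _]] := M_valid.
have trans_not_s' x : \sum_(y < S | y != s') trans M x (pi x) y <= 1 - eta.
  have := trans1 x (pi x); rewrite (bigD1 s') //= => <-.
  by rewrite addrC lerBrDr lerD2l trans_ge.
have eta1 : eta <= 1.
  apply: le_trans (trans_ge s (pi s) s) _.
  by rewrite -(trans1 s (pi s)) (bigD1 s) //= lerDl sumr_ge0.
have avoid_s' t : avoid_prob M pi s' t s' = 0 by case: t => [|t] /=; rewrite eqxx ?mul0r.
have avoid_le t x : 0 <= avoid_prob M pi s' t x <= (1 - eta) ^+ t.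
  elim: t x => [|t IH] x /=; first by case: (x != s'); rewrite ?ler01 ?lexx.
  set sm := \sum_(y < S) _.
  have sm0 : 0 <= sm by apply: sumr_ge0 => y _; rewrite mulr_ge0 //; case/andP: (IH y).
  have sm_le : sm <= (1 - eta) ^+ t.+1.
    rewrite /sm (bigD1 s') //= avoid_s' mulr0 add0r exprSr.
    apply: le_trans (_ : \sum_(y < S | y != s') trans M x (pi x) y * (1 - eta) ^+ t <= _).
      by apply: ler_sum => y _; apply: ler_wpM2l => //; case/andP: (IH y).
    by rewrite -mulr_suml mulrC ler_wpM2l ?exprn_ge0 ?trans_not_s' ?subr_ge0.
  by case: (x != s'); rewrite ?mul1r ?mul0r ?sm0 ?sm_le ?lexx ?exprn_ge0 ?subr_ge0.
have q01 : 0 <= 1 - eta < 1 by rewrite subr_ge0 eta1 gtrBl eta0.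
rewrite /exp_hitting_time; apply: le_lt_trans (ltry ((1 - (1 - eta))^-1)).
apply: (@le_trans _ _ (\esum_(t in [set: nat]) ((1 - eta) ^+ t)%:E)); last exact: esum_geometric_le.
by apply: le_esum => t _; rewrite lee_fin; case/andP: (avoid_le t s).
Qed.

End ValidMDP.

Section Runs.
Variables (R : realType) (S A : nat) (alg : algorithm R S A) (M : mdp R S A).
Hypotheses (alg_valid : valid_algorithm alg) (M_valid : valid_mdp M).
Local Notation hist := (history R S A).
Local Notation stp := (step R S A).

Definition extensions (p : hist) n :=
  [set h : hist | exists s, (size s <= n)%N /\ h = p ++ s].

Definition proper_extensions (p : hist) n :=
  [set h : hist | exists x s, (size s < n)%N /\ h = rcons p x ++ s].

Lemma proper_extensions0 p : proper_extensions p 0 = set0.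
Proof. by apply/seteqP; split => h // [x [s []]]. Qed.

Lemma esum_extensions (F : hist -> \bar R) p n :
  (forall h, extensions p n h -> (0 <= F h)%E) ->
  \esum_(h in extensions p n) F h = (F p + \esum_(h in proper_extensions p n) F h)%E.
Proof.
move=> F0; rewrite (esumID [set p]) //.
have -> : extensions p n `&` [set p] = [set p].
  apply/seteqP; split => h /=; first by case=> _ ->.
  by move=> ->; split => //; exists [::]; rewrite cats0.
have -> : extensions p n `&` ~` [set p] = proper_extensions p n.
  apply/seteqP; split => h /=.
    case=> -[[|x s] [hs ->]] /= hp; first by rewrite cats0 in hp.
    by exists x, s; split => //; rewrite cat_rcons.
  case=> x [s [hs ->]]; split; first by exists (x :: s); rewrite cat_rcons.
  rewrite cat_rcons => /(congr1 size); rewrite size_cat /= => /eqP.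
  by rewrite -{2}(addn0 (size p)) eqn_add2l.
by rewrite esum_set1 //; apply: F0; exists [::]; rewrite cats0.
Qed.

Lemma esum_proper_extensions (F : hist -> \bar R) p n :
  (forall h, proper_extensions p n.+1 h -> (0 <= F h)%E) ->
  \esum_(h in proper_extensions p n.+1) F h =
  \esum_(x in [set: stp]) \esum_(h in extensions (rcons p x) n) F h.
Proof.
move=> F0; rewrite esum_esum; last first.
  by move=> x h _ [s [hs ->]]; apply: F0; exists x, s.
rewrite (reindex_esum ([set: stp] `*`` (fun x => extensions (rcons p x) n))
  (proper_extensions p n.+1) snd) //.
split.
- by move=> [x h] [_ [s [hs ->]]] /=; exists x, s.
- move=> [x1 h1] [x2 h2]; rewrite !inE => -[_ [s1 [_ /= ->]]] [_ [s2 [_ /= ->]]] /=.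
  by rewrite !cat_rcons => /eqP; rewrite eqseq_cat // => /andP[_ /eqP [-> ->]].
- by move=> h [x [s [hs ->]]]; exists (x, rcons p x ++ s) => //; split => //; exists s.
Qed.

Lemma reach_rcons p x : reach alg M (rcons p x) =
  reach alg M p * decide alg p (Some x.1) * obs_prob M x.1 x.2.
Proof. by rewrite /reach rev_rcons /= revK. Qed.

Lemma reach_ge0 h : 0 <= reach alg M h.
Proof.
have [dec0 _] := alg_valid.
elim/last_ind: h => [|p x IH]; first by rewrite /reach /= ler01.
by rewrite reach_rcons; apply: mulr_ge0; [apply: mulr_ge0 | apply: obs_prob_ge0].
Qed.

Definition stop_prob h := reach alg M h * decide alg h None.

Lemma stop_prob_ge0 h : 0 <= stop_prob h.
Proof. by have [dec0 _] := alg_valid; rewrite mulr_ge0 ?reach_ge0. Qed.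

Lemma esum_obs_prob_weighted_le (c : 'I_S * 'I_A -> R) : (forall q, 0 <= c q) ->
  (\esum_(x in [set: stp]) (c x.1 * obs_prob M x.1 x.2)%:E <= (\sum_q c q)%:E)%E.
Proof.
move=> c0.
rewrite (_ : [set: stp] = [set: 'I_S * 'I_A] `*`` (fun _ => [set: R * 'I_S])); last first.
  by apply/seteqP; split.
rewrite -(@esum_esum _ _ _ setT (fun _ => setT) (fun q o => (c q * obs_prob M q o)%:E)) /=;
  last by move=> q o _ _; rewrite lee_fin mulr_ge0 ?obs_prob_ge0.
apply: (@le_trans _ _ (\esum_(q in [set: 'I_S * 'I_A]) (c q)%:E)); last exact: esum_finType_le.
apply: le_esum => q _; under eq_esum do rewrite EFinM.
apply: le_trans (@esumZl_le R _ setT _ (fun o => (obs_prob M q o)%:E) (c0 q) _) _.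
  by move=> o; rewrite lee_fin obs_prob_ge0.
by rewrite -[X in (_ <= X)%E]mule1 lee_wpmul2l ?lee_fin ?esum_obs_prob_le1.
Qed.

Lemma esum_reach_rcons_le p :
  (\esum_(x in [set: stp]) (reach alg M (rcons p x))%:E <=
   (reach alg M p * (1 - decide alg p None))%:E)%E.
Proof.
have [dec0 dec1] := alg_valid.
under eq_esum do rewrite reach_rcons -mulrA EFinM.
apply: le_trans (@esumZl_le R _ setT (reach alg M p)
  (fun x => (decide alg p (Some x.1) * obs_prob M x.1 x.2)%:E) (reach_ge0 p) _) _.
  by move=> x; rewrite lee_fin mulr_ge0 ?obs_prob_ge0.
rewrite EFinM lee_wpmul2l ?lee_fin ?reach_ge0 // -(dec1 p) addrAC subrr add0r.
exact: (esum_obs_prob_weighted_le (fun q => dec0 p (Some q))).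
Qed.

Lemma esum_stop_prob_extensions_le n p :
  (\esum_(h in extensions p n) (stop_prob h)%:E <= (reach alg M p)%:E)%E.
Proof.
have [dec0 dec1] := alg_valid.
have stop_le1 p' : decide alg p' None <= 1 by rewrite -(dec1 p') lerDl sumr_ge0.
have stop0 (P : set hist) h : P h -> (0 <= (stop_prob h)%:E)%E.
  by rewrite lee_fin stop_prob_ge0.
elim: n p => [|n IH] p; rewrite esum_extensions; try exact: stop0.
  rewrite proper_extensions0 esum_set0 adde0 lee_fin /stop_prob.
  by rewrite ler_piMr ?reach_ge0.
rewrite esum_proper_extensions; last exact: stop0.
apply: le_trans (leeD (lexx _) (le_esum (fun x _ => IH (rcons p x)))) _.
apply: le_trans (leeD (lexx _) (esum_reach_rcons_le p)) _.
by rewrite -EFinD lee_fin /stop_prob mulrBr mulr1 addrC subrK.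
Qed.

(* a stopped history of length [size p + k] is counted [k] times on the left, once for
   each of its prefixes strictly longer than [p] on the right *)
Lemma esum_extra_steps_stop_prob_le n p :
  (\esum_(h in extensions p n) (((size h)%:R - (size p)%:R) * stop_prob h)%:E <=
   \esum_(h in proper_extensions p n) (reach alg M h)%:E)%E.
Proof.
have weight0 q m h : extensions q m h ->
    (0 <= ((((size h)%:R - (size q)%:R) * stop_prob h))%:E)%E.
  move=> [s [_ ->]]; rewrite size_cat natrD addrAC subrr add0r.
  by rewrite lee_fin mulr_ge0 ?stop_prob_ge0.
have reach0 (P : set hist) h : P h -> (0 <= (reach alg M h)%:E)%E.
  by rewrite lee_fin reach_ge0.
elim: n p => [|n IH] p; rewrite esum_extensions; try exact: weight0.
  by rewrite proper_extensions0 esum_set0 adde0 subrr mul0r; apply: esum_ge0.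
rewrite esum_proper_extensions; last first.
  by move=> h [x [s [hs ->]]]; apply/weight0; exists (x :: s); rewrite cat_rcons.
rewrite subrr mul0r add0e esum_proper_extensions; last exact: reach0.
apply: le_esum => x _; rewrite (@esum_extensions (fun h => (reach alg M h)%:E)); last exact: reach0.
have split_weight h : extensions (rcons p x) n h ->
    ((((size h)%:R - (size p)%:R) * stop_prob h)%:E =
     (((size h)%:R - (size (rcons p x))%:R) * stop_prob h)%:E + (stop_prob h)%:E)%E.
  move=> _; rewrite -EFinD size_rcons -addn1 natrD; congr (_%:E).
  by rewrite opprD addrA [in RHS]mulrBl mul1r subrK.
rewrite (eq_esum split_weight) esumD; first last.
- by move=> h _; rewrite lee_fin stop_prob_ge0.
- exact: weight0.
by rewrite addeC leeD ?esum_stop_prob_extensions_le.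
Qed.

Lemma esum_le_of_extensions (f : hist -> \bar R) (c : \bar R) :
  (forall n, (\esum_(h in extensions [::] n) f h <= c)%E) ->
  (\esum_(h in [set: hist]) f h <= c)%E.
Proof.
move=> le_c; apply: ge_ereal_sup => _ [X [finX _] <-].
have [n Xn] := finite_set_size_bound finX.
apply: le_trans (le_c n); apply: ereal_sup_ubound; exists X => //; split => //.
by move=> h Xh; exists h; split => //; apply: Xn.
Qed.

Lemma esum_stop_prob_le1 : (\esum_(h in [set: hist]) (stop_prob h)%:E <= 1)%E.
Proof. by apply: esum_le_of_extensions => n; apply: esum_stop_prob_extensions_le. Qed.

Lemma esum_size_stop_prob_le :
  (\esum_(h in [set: hist]) ((size h)%:R * stop_prob h)%:E <= expected_samples alg M)%E.
Proof.
apply: esum_le_of_extensions => n.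
under eq_esum do rewrite -[(size _)%:R]subr0.
apply: le_trans (esum_extra_steps_stop_prob_le n [::]) _.
by apply: le_esum_subset => h [x [s [_ ->]]].
Qed.

End Runs.

Section TightProbability.
Variables (R : realType) (S A : nat) (alg : algorithm R S A).

Lemma probability_fin_num (m : probability R R) I : measurable I -> m I \is a fin_num.
Proof.
by move=> mI; rewrite ge0_fin_numE ?measure_ge0 // (le_lt_trans (probability_le1 _ mI)) ?ltry.
Qed.

Lemma fine_probability_ge0 (m : probability R R) I : 0 <= fine (m I).
Proof. by rewrite fine_ge0 ?measure_ge0. Qed.

Lemma fine_probability_disjoint_le1 (m : probability R R) I J :
  measurable I -> measurable J -> I `&` J = set0 -> fine (m I) + fine (m J) <= 1.
Proof.
move=> mI mJ IJ; rewrite -lee_fin EFinD !fineK ?probability_fin_num //.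
by rewrite -measureU // probability_le1 //; apply: measurableU.
Qed.

Lemma prob_tightE M H Delta : prob_tight alg M H Delta =
  \esum_(h in [set: history R S A])
    (stop_prob alg M h * fine (output alg h `[H, (H + Delta)%R]%classic))%:E.
Proof.
apply: eq_esum => h _.
by rewrite [RHS]EFinM fineK // probability_fin_num //; apply: measurable_itv.
Qed.

Lemma prob_tight_disjoint_le1 M H H' Delta :
  valid_algorithm alg -> valid_mdp M -> H + Delta < H' ->
  (prob_tight alg M H Delta + prob_tight alg M H' Delta <= 1)%E.
Proof.
move=> alg_valid M_valid lt_H'; rewrite !prob_tightE -esumD; first last.
- by move=> h _; rewrite lee_fin mulr_ge0 ?stop_prob_ge0 ?fine_probability_ge0.
- by move=> h _; rewrite lee_fin mulr_ge0 ?stop_prob_ge0 ?fine_probability_ge0.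
apply: le_trans (esum_stop_prob_le1 alg_valid M_valid).
apply: le_esum => h _; rewrite -EFinD lee_fin -mulrDr ler_piMr ?stop_prob_ge0 //.
apply: fine_probability_disjoint_le1; rewrite ?measurable_itv //.
apply/seteqP; split => // x [] /=; rewrite !in_itv /= => /andP[_ x1] /andP[x2 _].
by have := le_lt_trans (le_trans x2 x1) lt_H'; rewrite ltxx.
Qed.

End TightProbability.

Section ChangeOfMeasure.
Variables (R : realType) (S A : nat) (alg : algorithm R S A) (M M' : mdp R S A) (e : R).
Hypotheses (alg_valid : valid_algorithm alg)
  (M_valid : valid_mdp M) (M'_valid : valid_mdp M') (e01 : 0 <= e <= 1).
Hypothesis obs_prob_contract : forall q o, (1 - e) * obs_prob M q o <= obs_prob M' q o.

Lemma reach_contract h : (1 - e) ^+ size h * reach alg M h <= reach alg M' h.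
Proof.
have [dec0 _] := alg_valid; have e1 : 0 <= 1 - e by rewrite subr_ge0; case/andP: e01.
elim/last_ind: h => [|p x IH]; first by rewrite expr0 mul1r.
rewrite !reach_rcons size_rcons exprSr.
rewrite (_ : _ * _ = ((1 - e) ^+ size p * reach alg M p) * decide alg p (Some x.1) *
                    ((1 - e) * obs_prob M x.1 x.2)); last by ring.
have r0 := reach_ge0 alg_valid M_valid p.
apply: ler_pM; last exact: obs_prob_contract.
- by rewrite !mulr_ge0 ?exprn_ge0.
- by rewrite mulr_ge0 ?obs_prob_ge0.
- by apply: ler_pM; rewrite ?mulr_ge0 ?exprn_ge0.
Qed.

Lemma stop_prob_contract h :
  stop_prob alg M h <= stop_prob alg M' h + e * ((size h)%:R * stop_prob alg M h).
Proof.
have [dec0 _] := alg_valid.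
have r0 := reach_ge0 alg_valid M_valid h.
have le_bern := ler_wpM2r r0 (bernoulli_ineq (size h) e01).
have le_reach : reach alg M h <= reach alg M' h + e * ((size h)%:R * reach alg M h).
  by have := reach_contract h; nra.
rewrite /stop_prob; apply: le_trans (ler_wpM2r (dec0 h None) le_reach) _.
by rewrite mulrDl !mulrA.
Qed.

Lemma prob_tight_contract H Delta :
  (prob_tight alg M H Delta <= prob_tight alg M' H Delta + e%:E * expected_samples alg M)%E.
Proof.
set I := `[H, (H + Delta)%R]%classic.
have o01 h : 0 <= fine (output alg h I) <= 1.
  rewrite fine_probability_ge0 -lee_fin fineK ?probability_fin_num ?probability_le1 //;
  exact: measurable_itv.
have e0 : 0 <= e by case/andP: e01.
have size_stop0 h : 0 <= (size h)%:R * stop_prob alg M h by rewrite mulr_ge0 ?stop_prob_ge0.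
rewrite !prob_tightE -/I.
have pointwise : (\esum_(h in [set: history R S A]) (stop_prob alg M h * fine (output alg h I))%:E <=
    \esum_(h in [set: history R S A]) (stop_prob alg M' h * fine (output alg h I))%:E +
    \esum_(h in [set: history R S A]) (e * ((size h)%:R * stop_prob alg M h))%:E)%E.
  rewrite -esumD => [||h _]; last by rewrite lee_fin mulr_ge0.
  - apply: le_esum => h _; rewrite -EFinD lee_fin.
    have [lo hi] := andP (o01 h).
    have := stop_prob_contract h; have := stop_prob_ge0 alg_valid M_valid h.
    have := mulr_ge0 e0 (size_stop0 h); nra.
  - by move=> h _; rewrite lee_fin mulr_ge0 ?(stop_prob_ge0 alg_valid M'_valid) ?fine_probability_ge0.
apply: le_trans pointwise _; rewrite leeD2l //.
under eq_esum do rewrite EFinM.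
apply: le_trans (esumZl_le _ e0 _) _; first by move=> h; rewrite lee_fin.
by rewrite lee_wpmul2l ?lee_fin // esum_size_stop_prob_le.
Qed.

End ChangeOfMeasure.

Section HardInstance.
Variable R : realType.

Definition hard_trans (eta : R) (s : 'I_3) (_ : 'I_2) (s' : 'I_3) : R :=
  if s == s' then 1 - 2 * eta else eta.

Definition hard_rew (a e : R) (s : 'I_3) (_ : 'I_2) : seq (R * R) :=
  if s == ord0 then [:: (a, 1 - e); (1, e)] else [:: (0, 1)].

Definition hard_mdp (eta a e : R) : mdp R 3 2 := MDP (hard_trans eta) (hard_rew a e).

Definition hard_mean (a e : R) := a * (1 - e) + e.

Lemma sum_hard_trans eta s x (f : 'I_3 -> R) :
  \sum_(s' < 3) hard_trans eta s x s' * f s' = (1 - 3 * eta) * f s + eta * \sum_(s' < 3) f s'.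
Proof.
rewrite (bigD1 s) // [in RHS](bigD1 s) //= /hard_trans eqxx mulrDr addrA.
rewrite (eq_bigr (fun s' => eta * f s')) => [|s' neq_s's]; last by rewrite eq_sym (negbTE neq_s's).
by rewrite -mulr_sumr; congr (_ + _); ring.
Qed.

Variables (eta a e : R).

Lemma hard_trans_ge (eta3 : 3 * eta <= 1) s x s' : eta <= hard_trans eta s x s'.
Proof. by rewrite /hard_trans; case: ifP => _; lra. Qed.

Lemma hard_mdp_valid (eta0 : 0 < eta) (eta3 : 3 * eta <= 1)
    (a01 : 0 <= a <= 1) (e01 : 0 <= e <= 1) :
  valid_mdp (hard_mdp eta a e).
Proof.
case/andP: a01 => a0 a1; case/andP: e01 => e0 e1.
split; [|split; [|split]] => /=.
- by move=> s x s'; apply: le_trans (hard_trans_ge eta3 s x s'); apply: ltW.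
- move=> s x; rewrite (eq_bigr (fun s' => hard_trans eta s x s' * 1)) => [|s' _]; last by rewrite mulr1.
  by rewrite sum_hard_trans sumr_const card_ord; ring.
- move=> s x p; rewrite /hard_rew; case: ifP => _; rewrite !inE.
    by case/orP => /eqP -> /=; lra.
  by move=> /eqP -> /=; lra.
- by move=> s x; rewrite /hard_rew; case: ifP => _; rewrite !big_cons big_nil /=; ring.
Qed.

Lemma mean_rew_hard s x :
  mean_rew (hard_mdp eta a e) s x = if s == ord0 then hard_mean a e else 0.
Proof.
by rewrite /mean_rew /= /hard_rew /hard_mean; case: ifP => _; rewrite !big_cons big_nil /=; ring.
Qed.

(* the bias is [2c] at state [0] and [-c] elsewhere: it sums to [0], so the Bellman
   equation reduces to [mean_rew s = g + 3 eta b s] *)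
Lemma hard_mdp_bias_span (eta0 : 0 < eta) (a01 : 0 <= a <= 1) (e01 : 0 <= e <= 1) :
  opt_bias_span (hard_mdp eta a e) (hard_mean a e / (3 * eta)).
Proof.
set c := hard_mean a e / (9 * eta).
pose b (s : 'I_3) := if s == ord0 then 2 * c else - c.
have sum_b : \sum_(s < 3) b s = 0.
  rewrite (bigD1 ord0) //= /b eqxx (eq_bigr (fun _ => - c)); last by move=> s /negbTE ->.
  by rewrite sumr_const cardC1 card_ord /= -mulr_natr; ring.
have bellman s x : mean_rew (hard_mdp eta a e) s x +
    \sum_(s' < 3) trans (hard_mdp eta a e) s x s' * b s' = hard_mean a e / 3 + b s.
  rewrite mean_rew_hard /= sum_hard_trans sum_b /b /c.
  by case: ifP => _; field; rewrite gt_eqF.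
have span_c : 2 * c - - c = hard_mean a e / (3 * eta) by rewrite /c; field; rewrite gt_eqF.
exists (hard_mean a e / 3), b; split.
  by move=> s; split => [x|]; [rewrite bellman | exists ord0; rewrite bellman].
have mean0 : 0 <= hard_mean a e.
  by case/andP: a01 => a0 a1; case/andP: e01 => e0 e1; rewrite /hard_mean; nra.
have c0 : 0 <= c by rewrite divr_ge0 // mulr_ge0 // ltW.
split; last by exists ord0, ord_max; rewrite /b /= -span_c.
by move=> s t; rewrite -span_c /b; case: ifP => _; case: ifP => _; lra.
Qed.

Lemma obs_prob_hard_contract (eta0 : 0 < eta) (eta3 : 3 * eta <= 1) (e01 : 0 <= e <= 1) q o :
  (1 - e) * obs_prob (hard_mdp eta a 0) q o <= obs_prob (hard_mdp eta a e) q o.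
Proof.
case/andP: e01 => e0 e1.
rewrite /obs_prob mulrA ler_wpM2r //=.
  by apply: le_trans (hard_trans_ge eta3 _ _ _); apply: ltW.
rewrite /rew_prob /= /hard_rew; case: ifP => _; rewrite !big_cons !big_nil /=;
  by repeat case: ifP => _; lra.
Qed.

End HardInstance.

Lemma two_point_bound (R : realType) (S A : nat) (alg : algorithm R S A)
    (M M' : mdp R S A) (e H H' Delta delta : R) :
  valid_algorithm alg -> tight_bias_bound alg Delta delta ->
  valid_mdp M -> ergodic M -> opt_bias_span M H ->
  valid_mdp M' -> ergodic M' -> opt_bias_span M' H' ->
  H + Delta < H' -> 0 <= e <= 1 ->
  (forall q o, (1 - e) * obs_prob M q o <= obs_prob M' q o) ->
  ((1 - delta)%:E + (1 - delta)%:E <= 1 + e%:E * expected_samples alg M)%E.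
Proof.
move=> alg_valid tight M_valid M_erg M_span M'_valid M'_erg M'_span lt_H' e01 contract.
apply: le_trans (leeD (tight M M_valid M_erg H M_span) (tight M' M'_valid M'_erg H' M'_span)) _.
apply: le_trans (leeD (prob_tight_contract alg_valid M_valid M'_valid e01 contract H Delta)
  (lexx _)) _.
rewrite addeAC leeD2r //; last exact: prob_tight_disjoint_le1.
Qed.

Lemma inv_2expR4_lt_quarter (R : realType) : (2 * expR 4)^-1 < 1 / 4 :> R.
Proof.
have expR4 : 5 <= expR 4 :> R by have := expR_ge1Dx (4 : R); lra.
rewrite div1r ltf_pV2 ?posrE ?mulr_gt0 ?expR_gt0 //; lra.
Qed.

(* [eps] is small enough for the change of measure to cost less than [1/2] over [T]
   expected samples, and [eta] of order [eps / Delta] makes [eps] visible in the span *)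
Lemma hard_parameters (R : realType) (T Delta : R) : 0 < T -> 0 < Delta ->
  exists eta a eps,
    [/\ [/\ 0 < eta, 3 * eta <= 1, 0 <= a <= 1 & 0 <= eps <= 1], eps * T < 1 / 2,
      hard_mean a 0 / (3 * eta) = 1 / 2 & 1 / 2 + Delta < hard_mean a eps / (3 * eta)].
Proof.
move=> T0 Delta0.
set eps := (2 * (T + 1))^-1; set eta := eps / (12 * Delta + 4).
have epsE : eps * (2 * (T + 1)) = 1 by rewrite mulVf // gt_eqF // mulr_gt0 // ltr_wpDl // ltW.
have etaE : eta * (12 * Delta + 4) = eps.
  by rewrite /eta mulrVK // unitfE gt_eqF // ltr_wpDl // mulr_ge0 // ltW.
have eps0 : 0 < eps by rewrite invr_gt0 mulr_gt0 // ltr_wpDl // ltW.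
have eta0 : 0 < eta by rewrite divr_gt0 // ltr_wpDl // mulr_ge0 // ltW.
have eps_half : eps <= 1 / 2 by nra.
exists eta, (3 * eta / 2), eps; (split; first split) => //; rewrite /hard_mean.
- by nra.
- by apply/andP; split; nra.
- by apply/andP; split; nra.
- by nra.
- by field; rewrite gt_eqF.
- rewrite ltr_pdivlMr; last by rewrite mulr_gt0.
  by have := mulr_gt0 eta0 eps0; nra.
Qed.

Theorem mainTheorem1 (R : realType) (delta T Delta : R) :
  delta < (2 * expR 4)^-1 -> 0 < T -> 0 < Delta ->
  exists M : mdp R 3 2,
    [/\ valid_mdp M, ergodic M, opt_bias_span M (1 / 2) &
      forall alg : algorithm R 3 2,
        valid_algorithm alg -> tight_bias_bound alg Delta delta ->
        (T%:E < expected_samples alg M)%E].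
Proof.
move=> lt_delta T0 Delta0.
have [eta [a [eps [[eta0 eta3 a01 eps01] epsT span_half gap]]]] := hard_parameters T0 Delta0.
have zero01 : 0 <= (0 : R) <= 1 by rewrite lexx ler01.
have M_valid := hard_mdp_valid eta0 eta3 a01 zero01.
have M'_valid := hard_mdp_valid eta0 eta3 a01 eps01.
have M_erg := ergodic_of_trans_ge M_valid eta0 (hard_trans_ge eta3).
have M_span := hard_mdp_bias_span eta0 a01 zero01; rewrite span_half in M_span.
exists (hard_mdp eta a 0); split => // alg alg_valid tight.
rewrite ltNge; apply/negP => le_T.
have := two_point_bound alg_valid tight M_valid M_erg M_span M'_valid
  (ergodic_of_trans_ge M'_valid eta0 (hard_trans_ge eta3))
  (hard_mdp_bias_span eta0 a01 eps01) gap eps01 (obs_prob_hard_contract a eta0 eta3 eps01).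
have eps0 : 0 <= eps by case/andP: eps01.
move/le_trans/(_ (leeD (lexx 1%E) (lee_wpmul2l (eps0 : (0 <= eps%:E)%E) le_T))).
rewrite -EFinM -!EFinD lee_fin.
have := inv_2expR4_lt_quarter R; lra.
Qed.
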